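(* We have \[ (n-1)P_{n-1}(y)=P'_{n-1}(y)-P'_n(y)\quad(n\ge1),\qquad (n-1)Q_{n-1}(y)=Q'_{n-1}(y)-Q'_n(y)\quad(n\ge2). \]
   Context: Let $A$ be the ring of formal series $\sum_{n\ge0}q_n(y)x^{-n}$, each $q_n$ a complex polynomial of degree at most $n$, with termwise formal derivatives $a_x=-\sum_{n\ge1}nq_n(y)x^{-n-1}$, $a_y=\sum_{n\ge1}q_n'(y)x^{-n}$, and $\log(1+u)=\sum_{k\ge1}(-1)^{k+1}u^k/k$ for $u$ with zero constant term. Let $V\in A$ be the unique solution of $V=1+\frac{y}{x}-\frac{1}{x}V-V_x-\frac{1}{x}V_y+\frac{1}{x}\log V$, and define polynomials $P_{n-1}$ ($n\ge1$) and $Q_n$ ($n\ge1$) by $V=1+\sum_{n\ge1}P_{n-1}(y)x^{-n}$ and $\log V=\sum_{n\ge1}Q_n(y)x^{-n}$ (so $P_0=y-1$). Primes denote derivatives in $y$. *)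

From HB Require Import structures.
From mathcomp Require Import all_boot all_order all_algebra.
From mathcomp Require Import complex.
From mathcomp Require Import Rstruct.
From Stdlib Require Reals.
Set Implicit Arguments. Unset Strict Implicit. Unset Printing Implicit Defensive.
Import Order.TTheory GRing.Theory Num.Theory.
Local Open Scope ring_scope.

Definition C : Type := (complex Reals.Rdefinitions.R).

(* A formal series  sum_{n>=0} a n (y) x^{-n},  coefficients in C[y]. *)
Definition series := nat -> {poly C}.

(* membership in the ring A : deg (a n) <= n *)
Definition inA (a : series) : Prop := forall n, (size (a n) <= n.+1)%N.

Definition sone : series := fun n => (n == 0%N)%:R%:P.
Definition smul (a b : series) : series :=
  fun n => \sum_(i < n.+1) a i * b (n - i)%N.
Definition spow (a : series) (k : nat) : series := iter k (smul a) sone.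
(* log(1+u) = sum_{k>=1} (-1)^{k+1} u^k / k, for u with zero constant term;
   only k <= n contributes to the coefficient of x^{-n}. *)
Definition slog1p (u : series) : series :=
  fun n => \sum_(1 <= k < n.+1) (((-1) ^+ k.+1 / k%:R : C) *: spow u k n).
Definition sxinv (a : series) : series :=
  fun n => if n is m.+1 then a m else 0.
(* a_x = - sum_{m>=1} m a_m x^{-m-1} *)
Definition sdx (a : series) : series :=
  fun n => if n is m.+1 then - (m%:R *: a m) else 0.
Definition sdy (a : series) : series := fun n => (a n)^`().
Definition y_over_x : series := fun n => if n == 1%N then 'X else 0.
Definition sminus1 (a : series) : series := fun n => a n - sone n.
Definition slog (V : series) : series := slog1p (sminus1 V).

(* right-hand side of  V = 1 + y/x - V/x - V_x - V_y/x + (log V)/x *)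
Definition Veq_rhs (V : series) : series :=
  fun n => sone n + y_over_x n - sxinv V n - sdx V n - sxinv (sdy V) n
           + sxinv (slog V) n.

(* V = 1 + sum_{n>=1} P_{n-1} x^{-n} ; log V = sum_{n>=1} Q_n x^{-n} *)
Definition Pcoef (V : series) (m : nat) : {poly C} := V m.+1.
Definition Qcoef (V : series) (n : nat) : {poly C} := slog V n.

From HB Require Import structures.
From mathcomp Require Import all_boot all_order all_algebra.
From mathcomp Require Import complex Rstruct ring zify.
From Stdlib Require Import FunctionalExtensionality.
Import GRing.Theory Num.Theory.
Local Open Scope ring_scope.

(* Write [δ := x ∂_y - ∂_y - x ∂_x].  It is a derivation of the ring of
   series, so [V δ(log V) = δ V].  Substituting the defining equation of [V]
   expresses [δ(log V) - 1] through [G := δ V - V], and comparing coefficients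
   of [V (δ(log V) - 1) = G] (with [V_0 = 1]) shows [G = 0] by induction.
   The coefficients of [G = 0] are the identities for [P]; those of
   [δ(log V) = 1] are the identities for [Q]. *)

Section SeriesRing.
Implicit Types a b c : series.

Definition strunc (N : nat) a : {poly {poly C}} := \poly_(i < N) a i.

Lemma strunc_coef N a m : (m < N)%N -> (strunc N a)`_m = a m.
Proof. by move=> ltmN; rewrite coef_poly ltmN. Qed.

Lemma smul_coef a b (p q : {poly {poly C}}) n :
  (forall m, (m <= n)%N -> a m = p`_m) -> (forall m, (m <= n)%N -> b m = q`_m) ->
  smul a b n = (p * q)`_n.
Proof.
move=> Ea Eb; rewrite coefM; apply: eq_bigr => i _.
by rewrite Ea ?Eb ?leq_subr // -ltnS.
Qed.

Lemma smul_struncE a b n : smul a b n = (strunc n.+1 a * strunc n.+1 b)`_n.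
Proof. by apply: smul_coef => m lemn; rewrite strunc_coef. Qed.

Lemma smulC a b : smul a b = smul b a.
Proof.
by apply: functional_extensionality => n; rewrite !smul_struncE mulrC.
Qed.

Lemma smulA a b c : smul a (smul b c) = smul (smul a b) c.
Proof.
apply: functional_extensionality => n.
have Etrunc d e m : (m <= n)%N ->
    smul d e m = (strunc n.+1 d * strunc n.+1 e)`_m.
  by move=> lemn; apply: smul_coef => k lekm; rewrite strunc_coef // ltnS (leq_trans lekm).
rewrite (@smul_coef _ _ (strunc n.+1 a) (strunc n.+1 b * strunc n.+1 c));
  [|by move=> m ?; rewrite strunc_coef|exact: Etrunc].
rewrite (@smul_coef _ _ (strunc n.+1 a * strunc n.+1 b) (strunc n.+1 c));
  [by rewrite mulrA|exact: Etrunc|by move=> m ?; rewrite strunc_coef].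
Qed.

Lemma smul1r a : smul a sone = a.
Proof.
apply: functional_extensionality => n.
rewrite /smul big_ord_recr /= subnn mulr1 big1 ?add0r // => -[i ltin] _ /=.
by rewrite /sone subn_eq0 leqNgt ltin mulr0.
Qed.

Lemma smul1l a : smul sone a = a.
Proof. by rewrite smulC smul1r. Qed.

Lemma smulDl a b c n : smul (fun i => a i + b i) c n = smul a c n + smul b c n.
Proof. by rewrite /smul -big_split; apply: eq_bigr => i _; rewrite mulrDl. Qed.

Lemma smulBl a b c n : smul (fun i => a i - b i) c n = smul a c n - smul b c n.
Proof. by rewrite /smul -sumrB; apply: eq_bigr => i _; rewrite mulrBl. Qed.

Lemma smulBr a b c n : smul a (fun i => b i - c i) n = smul a b n - smul a c n.
Proof. by rewrite smulC smulBl !(smulC a). Qed.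

Lemma smulZr a b (k : C) n : smul a (fun i => k *: b i) n = k *: smul a b n.
Proof. by rewrite /smul scaler_sumr; apply: eq_bigr => i _; rewrite scalerAr. Qed.

Lemma smul_sumr a (F : nat -> series) N n :
  smul a (fun i => \sum_(k < N) F k i) n = \sum_(k < N) smul a (F k) n.
Proof. by rewrite /smul exchange_big; apply: eq_bigr => i _; rewrite mulr_sumr. Qed.

Lemma smul_recl a b n : smul a b n.+1 = a 0%N * b n.+1 + smul (fun i => a i.+1) b n.
Proof. by rewrite /smul big_ord_recl /= subn0. Qed.

Lemma sdy_smul a b n : sdy (smul a b) n = smul (sdy a) b n + smul a (sdy b) n.
Proof.
by rewrite /sdy /smul raddf_sum -big_split; apply: eq_bigr => i _; exact: derivM.
Qed.

Lemma scale_smul a b n :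
  n%:R *: smul a b n = smul (fun i => i%:R *: a i) b n + smul a (fun i => i%:R *: b i) n.
Proof.
rewrite /smul scaler_sumr -big_split; apply: eq_bigr => -[i ltin] _ /=.
by rewrite -scalerAl -scalerAr -scalerDl -natrD subnKC.
Qed.

Lemma spow_coef_lt u k j : u 0%N = 0 -> (j < k)%N -> spow u k j = 0.
Proof.
move=> u0; elim: k j => [|k IHk] j // ltjk.
rewrite /= /smul big1 // => -[[|i] ltij] _ /=; first by rewrite u0 mul0r.
by rewrite IHk ?mulr0 //; lia.
Qed.

End SeriesRing.

(* [sdelta a] is the series [x a_y - a_y - x a_x], except that the constant
   term [(a 0)'] of [x a_y] is dropped; this is harmless when [(a 0)' = 0]. *)
Definition sdelta (a : series) : series :=
  fun n => (a n.+1)^`() - (a n)^`() + n%:R *: a n.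

Section Derivation.
Implicit Types a b u : series.

Lemma sdelta_smul a b : (a 0%N)^`() = 0 -> (b 0%N)^`() = 0 ->
  sdelta (smul a b) = fun n => smul (sdelta a) b n + smul a (sdelta b) n.
Proof.
move=> a0 b0; apply: functional_extensionality => n.
rewrite (smulC a (sdelta b)) /sdelta smulDl smulBl smulDl smulBl.
rewrite -[(smul a b n.+1)^`()]/(sdy (smul a b) n.+1) -[(smul a b n)^`()]/(sdy (smul a b) n).
rewrite !sdy_smul (smulC a (sdy b)) !smul_recl /sdy a0 b0 !mul0r !add0r scale_smul.
rewrite (smulC a (fun i => i%:R *: b i)); ring.
Qed.

Lemma sdelta_spow u : u 0%N = 0 -> forall k,
  sdelta (spow u k.+1) = fun n => k.+1%:R *: smul (spow u k) (sdelta u) n.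
Proof.
move=> u0; elim=> [|k IHk]; apply: functional_extensionality => n.
  by rewrite /= smul1r smul1l scale1r.
have spow0 : (spow u k.+1 0%N)^`() = 0 by rewrite spow_coef_lt ?deriv0.
rewrite [spow u k.+2]/= sdelta_smul ?u0 ?deriv0 // IHk smulZr (smulC (sdelta u)) smulA.
by rewrite -[smul (smul u (spow u k)) _]/(smul (spow u k.+1) (sdelta u)) -[k.+2]addn1 natrD scalerDl scale1r addrC.
Qed.

Definition slog1p_trunc u (N : nat) : series :=
  fun j => \sum_(1 <= k < N.+1) ((-1) ^+ k.+1 / k%:R : C) *: spow u k j.

Lemma slog1p_truncE u N j : u 0%N = 0 -> (j <= N)%N -> slog1p u j = slog1p_trunc u N j.
Proof.
move=> u0 lejN; rewrite /slog1p /slog1p_trunc (@big_cat_nat _ _ _ j.+1 1 N.+1) //=.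
rewrite [X in _ = _ + X]big_nat_cond [X in _ = _ + X]big1 ?addr0 // => k /andP[/andP[ltjk _] _].
by rewrite spow_coef_lt ?scaler0.
Qed.

Lemma sdelta_slog1p_trunc u N n : u 0%N = 0 ->
  sdelta (slog1p_trunc u N) n = \sum_(k < N) (-1) ^+ k *: smul (spow u k) (sdelta u) n.
Proof.
move=> u0; transitivity
    (\sum_(1 <= k < N.+1) ((-1) ^+ k.+1 / k%:R : C) *: sdelta (spow u k) n).
  rewrite /sdelta /slog1p_trunc !raddf_sum -!big_split /=; apply: eq_bigr => k _.
  by rewrite !derivZ scalerDr scalerBr !scalerA (mulrC n%:R).
rewrite big_add1 big_mkord; apply: eq_bigr => k _.
by rewrite sdelta_spow // scalerA divfK ?pnatr_eq0 // !exprS !mulN1r opprK.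
Qed.

Lemma sum_alternating (t : nat -> {poly C}) N :
  \sum_(k < N) (-1) ^+ k *: (t k + t k.+1) = t 0%N - (-1) ^+ N *: t N.
Proof.
elim: N => [|N IHN]; first by rewrite big_ord0 expr0 scale1r subrr.
by rewrite big_ord_recr /= IHN exprS mulN1r scaleNr opprK scalerDr addrA subrK.
Qed.

(* [δ (log (1 + u)) = Σ_k (-u)^k δ u], which telescopes against [1 + u]. *)
Lemma smul_sdelta_slog1p u n : u 0%N = 0 ->
  smul (fun i => sone i + u i) (sdelta (slog1p u)) n = sdelta u n.
Proof.
move=> u0; transitivity
    (smul (fun i => sone i + u i) (sdelta (slog1p_trunc u n.+1)) n).
  apply: eq_bigr => -[i ltin] _; congr (_ * _).
  by rewrite /sdelta !(@slog1p_truncE u n.+1) //; lia.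
rewrite (_ : sdelta (slog1p_trunc u n.+1) = fun i =>
    \sum_(k < n.+1) (-1) ^+ k *: smul (spow u k) (sdelta u) i); last first.
  by apply: functional_extensionality => i; rewrite sdelta_slog1p_trunc.
rewrite (smul_sumr _ (fun k i => (-1) ^+ k *: smul (spow u k) (sdelta u) i)).
under eq_bigr => k _ do rewrite smulZr smulDl smul1l smulA.
rewrite (sum_alternating (fun k => smul (spow u k) (sdelta u) n)) /= smul1l.
rewrite [smul (smul u _) _ n]/smul big1 ?scaler0 ?subr0 // => -[i ltin] _ /=.
by rewrite -[smul u _]/(spow u n.+1) spow_coef_lt ?mul0r.
Qed.

Lemma sdelta_sminus1 a : sdelta (sminus1 a) = sdelta a.
Proof.
apply: functional_extensionality => n.
rewrite /sdelta /sminus1 /sone !derivB !derivC !subr0 scalerBr.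
by case: n => [|n]; rewrite ?scale0r ?scaler0 !subr0.
Qed.

End Derivation.

Section Solution.
Variable V : series.
Hypothesis V_eq : forall n, V n = Veq_rhs V n.

Let G : series := fun n => sdelta V n - V n.

Lemma V_coef0 : V 0%N = 1.
Proof. by rewrite V_eq /Veq_rhs /sone /y_over_x /= !subr0 !addr0. Qed.

Lemma slog_coef n :
  slog V n = V n.+1 - y_over_x n.+1 + V n - V n *+ n + (V n)^`().
Proof. by rewrite (V_eq n.+1) /Veq_rhs /sone /sxinv /sdx /sdy /= scaler_nat; ring. Qed.

Lemma sdelta_slog n : sdelta (slog V) n = sone n + G n.+1 - G n *+ n + (G n)^`().
Proof.
rewrite /sdelta /G /sdelta !slog_coef !scaler_nat !(derivD, derivN, derivB, derivMn).
case: n => [|n]; rewrite /y_over_x /sone /= ?derivX !derivC ?mulr0n; ring.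
Qed.

Lemma smul_sdelta_slog n : smul V (sdelta (slog V)) n = sdelta V n.
Proof.
have u0 : sminus1 V 0%N = 0 by rewrite /sminus1 V_coef0 subrr.
have := smul_sdelta_slog1p _ n u0; rewrite sdelta_sminus1.
suff -> : (fun i => sone i + sminus1 V i) = V by [].
by apply: functional_extensionality => i; rewrite /sminus1 addrC subrK.
Qed.

Lemma smul_G n : smul V (fun i => G i.+1 - G i *+ i + (G i)^`()) n = G n.
Proof.
rewrite (_ : (fun i => _) = fun i => sdelta (slog V) i - sone i); last first.
  by apply: functional_extensionality => i; rewrite sdelta_slog; ring.
by rewrite smulBr smul1r smul_sdelta_slog.
Qed.

Lemma G_eq0 n : G n = 0.
Proof.
elim: n {-2}n (leqnn n) => [|n IHn] m lemn.
  rewrite leqn0 in lemn; rewrite (eqP lemn) /G /sdelta (V_eq 1%N) /Veq_rhs.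
  rewrite /sone /y_over_x /sxinv /sdx /sdy /= V_coef0 /slog /slog1p big_geq //.
  by rewrite !(derivD, derivN, derivB) derivX !derivC !scale0r; ring.
case: (ltngtP m n.+1) lemn => // [ltmn _|-> _]; first by rewrite IHn // -ltnS.
have := smul_G n; rewrite /smul big_ord_recl [X in _ + X]big1 => [|[i ltin] _]; last first.
  by rewrite /= /bump add1n !IHn ?deriv0 ?mul0rn ?subrr ?addr0 ?mulr0 //; lia.
by rewrite subn0 V_coef0 mul1r (IHn n) // deriv0 mul0rn !subr0 !addr0.
Qed.

Lemma sdelta_slog_eq0 n : sdelta (slog V) n.+1 = 0.
Proof. by rewrite sdelta_slog !G_eq0 deriv0 mul0rn /sone /= polyC0 subr0 !addr0. Qed.

End Solution.

Theorem theorem4p6 (V : series) :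
  inA V -> (forall n, V n = Veq_rhs V n) ->
  (forall n : nat, (1 <= n)%N ->
     (n - 1)%:R *: Pcoef V n.-1 = (Pcoef V n.-1)^`() - (Pcoef V n)^`()) /\
  (forall n : nat, (2 <= n)%N ->
     (n - 1)%:R *: Qcoef V n.-1 = (Qcoef V n.-1)^`() - (Qcoef V n)^`()).
Proof.
move=> _ V_eq; split.
- case=> [|m] // _; rewrite /Pcoef /= subn1.
  have := G_eq0 _ V_eq m.+1; rewrite /sdelta !scaler_nat => Em.
  by apply/subr0_eq; rewrite -Em /= mulrS; ring.
- case=> [|[|m]] // _; rewrite /Qcoef /= subn1.
  have := sdelta_slog_eq0 _ V_eq m; rewrite /sdelta !scaler_nat => Em.
  by apply/subr0_eq; rewrite -Em; ring.
Qed.
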